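(* Let $\mathbb{K}$ be an algebraically closed field of characteristic $p$, with $p=0$ or $p>n$. Let $(\Lambda_1,\Lambda_2,\Lambda_3)$ be a regular dual $3$-net of order $n\ge4$ in $PG(2,\mathbb{K})$. Then the three lines containing the components are not concurrent, i.e. they are the sides of a triangle (the net is triangular).
   Context: A dual $3$-net of order $n$ in $PG(2,\mathbb{K})$ is a triple $(\Lambda_1,\Lambda_2,\Lambda_3)$ of pairwise disjoint point sets, each of size $n$, such that every line meeting two distinct components meets each component in exactly one point. It is regular if its three components are contained in three (distinct) lines, one component on each line; it is triangular if these three lines are the sides of a triangle. *)

(* PG(2,K): points and lines are nonzero row vectors of K^3,
   taken up to a nonzero scalar; incidence is the vanishing of the dot product. *)
From HB Require Import structures.
From mathcomp Require Import all_boot all_order all_algebra.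
Set Implicit Arguments. Unset Strict Implicit. Unset Printing Implicit Defensive.
Import GRing.Theory.
Local Open Scope ring_scope.

Section PG2.
Variable K : fieldType.

Definition incident (P l : 'rV[K]_3) : Prop := \sum_(i < 3) P 0 i * l 0 i = 0.

Definition proj_eq (P Q : 'rV[K]_3) : Prop := exists c : K, c != 0 /\ Q = c *: P.

Definition dual_3net (n : nat) (L : 'I_3 -> 'I_n -> 'rV[K]_3) : Prop :=
  [/\ (forall i a, L i a != 0),
      (forall i j a b, proj_eq (L i a) (L j b) -> i = j /\ a = b) &
      (forall l : 'rV[K]_3, l != 0 -> forall i j : 'I_3, i <> j ->
         (exists a, incident (L i a) l) -> (exists b, incident (L j b) l) ->
         forall k, exists! a, incident (L k a) l)].

Definition component_lines (n : nat) (L : 'I_3 -> 'I_n -> 'rV[K]_3)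
  (l : 'I_3 -> 'rV[K]_3) : Prop :=
  [/\ (forall i, l i != 0),
      (forall i j, i <> j -> ~ proj_eq (l i) (l j)) &
      (forall i a, incident (L i a) (l i))].

Definition concurrent (l : 'I_3 -> 'rV[K]_3) : Prop :=
  exists P : 'rV[K]_3, P != 0 /\ forall i, incident P (l i).

Definition regular_net (n : nat) (L : 'I_3 -> 'I_n -> 'rV[K]_3) : Prop :=
  exists l, component_lines L l.

Definition triangular_net (n : nat) (L : 'I_3 -> 'I_n -> 'rV[K]_3) : Prop :=
  exists l, component_lines L l /\ ~ concurrent l.

End PG2.

(* Suppose the three component lines l0, l1, l2 pass through a common point.
   Scale every point of Λ0 and Λ1 to take the value 1 on l2 and every point of
   Λ2 to take the value 1 on l0.  Two scaled points of Λ1 differ by a vector on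
   l1 and l2, i.e. by a multiple of the common point, which lies on l0; hence
   all scaled points of Λ1 take one and the same value k on l0.  If a, b, c are
   collinear points of Λ0, Λ1, Λ2, the vector b - a lies on the line ab and on
   l2, so it is proportional to c, and evaluating on l0 gives b - a = k c.
   Fixing a and letting b run through Λ1, the third point c runs through Λ2
   once, so summing gives n a = Σ b - k Σ c for every a in Λ0.  As n is
   invertible in K, all points of Λ0 coincide, contradicting n >= 2. *)
From mathcomp Require Import all_boot all_order all_algebra.
From mathcomp Require Import ring.
Set Implicit Arguments. Unset Strict Implicit. Unset Printing Implicit Defensive.
Import GRing.Theory.
Local Open Scope ring_scope.

Definition i0 : 'I_3 := @Ordinal 3 0 isT.
Definition i1 : 'I_3 := @Ordinal 3 1 isT.
Definition i2 : 'I_3 := @Ordinal 3 2 isT.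

Fact neq_i01 : i0 <> i1. Proof. by []. Qed.
Fact neq_i02 : i0 <> i2. Proof. by []. Qed.
Fact neq_i12 : i1 <> i2. Proof. by []. Qed.

Lemma ord3P (j : 'I_3) : [\/ j = i0, j = i1 | j = i2].
Proof.
by case: j => [[|[|[|j]]] Hj] //; [constructor 1 | constructor 2 | constructor 3];
  apply: val_inj.
Qed.

Section CrossProduct.
Variable K : fieldType.
Implicit Types u v w x y z : 'rV[K]_3.

(* [incident P m] unfolds to [dot P m = 0]. *)
Definition dot u v : K := \sum_(i < 3) u 0 i * v 0 i.

Definition cross u v : 'rV[K]_3 := \row_(j < 3)
  match nat_of_ord j with
  | 0 => u 0 i1 * v 0 i2 - u 0 i2 * v 0 i1
  | 1 => u 0 i2 * v 0 i0 - u 0 i0 * v 0 i2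
  | _ => u 0 i0 * v 0 i1 - u 0 i1 * v 0 i0 end.

Lemma dotE u v : dot u v = u 0 i0 * v 0 i0 + u 0 i1 * v 0 i1 + u 0 i2 * v 0 i2.
Proof.
rewrite /dot !big_ord_recr big_ord0 /= add0r.
by congr (_ * _ + _ * _ + _ * _); congr (_ _ _); apply: val_inj.
Qed.

Lemma row3P u v :
  u 0 i0 = v 0 i0 -> u 0 i1 = v 0 i1 -> u 0 i2 = v 0 i2 -> u = v.
Proof.
by move=> e0 e1 e2; apply/rowP => j; rewrite ?mxE; case: (ord3P j) => ->.
Qed.

Lemma dotBl u v w : dot (u - v) w = dot u w - dot v w.
Proof. by rewrite !dotE !mxE; ring. Qed.

Lemma dotZl (a : K) u w : dot (a *: u) w = a * dot u w.
Proof. by rewrite !dotE !mxE; ring. Qed.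

Lemma dotZr (a : K) u w : dot u (a *: w) = a * dot u w.
Proof. by rewrite !dotE !mxE; ring. Qed.

Lemma dot_crossl u v : dot u (cross u v) = 0.
Proof. by rewrite dotE !mxE /=; ring. Qed.

Lemma dot_crossr u v : dot v (cross u v) = 0.
Proof. by rewrite dotE !mxE /=; ring. Qed.

Lemma dot_cross_swap u v w : dot v (cross u w) = - dot w (cross u v).
Proof. by rewrite !dotE !mxE /=; ring. Qed.

Lemma cross0r u : cross u 0 = 0.
Proof. by apply: row3P; rewrite !mxE /=; ring. Qed.

Lemma cross_crossE x y z : cross x (cross y z) = dot x z *: y - dot x y *: z.
Proof. by apply: row3P; rewrite !dotE !mxE /=; ring. Qed.

Lemma exists_dot_neq0 v : v != 0 -> exists x, dot x v != 0.
Proof.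
move=> v_neq0; have [j vj] : exists j, v 0 j != 0.
  apply/existsP; apply: contraNT v_neq0 => /existsPn v0.
  by apply/eqP/rowP => j; rewrite mxE; apply/eqP/negbNE.
exists (delta_mx 0 j); rewrite /dot (bigD1 j) //= big1 => [|i /negbTE ij].
  by rewrite mxE !eqxx mul1r addr0.
by rewrite mxE ij andbF mul0r.
Qed.

Lemma cross_eq0 u v : cross u v = 0 -> v != 0 -> exists s, u = s *: v.
Proof.
move=> uv0 /exists_dot_neq0[x xv]; exists (dot x u / dot x v).
apply: (scalerI xv); rewrite scalerA mulrC divfK //; apply/eqP.
by rewrite -subr_eq0 -cross_crossE uv0 cross0r.
Qed.

Lemma cross_neq0 u v : u != 0 -> v != 0 -> ~ proj_eq v u -> cross u v != 0.
Proof.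
move=> u_neq0 v_neq0 not_vu; apply/eqP => /cross_eq0 /(_ v_neq0)[s us].
apply: not_vu; exists s; split => //.
by apply: contraNneq u_neq0 => s0; rewrite us s0 scale0r.
Qed.

Lemma orthogonal2_cross x y z :
  cross y z != 0 -> dot x y = 0 -> dot x z = 0 -> exists s, x = s *: cross y z.
Proof.
by move=> yz xy xz; apply: cross_eq0 => //; rewrite cross_crossE xy xz !scale0r subr0.
Qed.

Lemma orthogonal2_proportional x y m1 m2 : cross m1 m2 != 0 ->
  dot x m1 = 0 -> dot x m2 = 0 -> dot y m1 = 0 -> dot y m2 = 0 -> y != 0 ->
  exists r, x = r *: y.
Proof.
move=> m12 x1 x2 y1 y2 y_neq0.
have [s ->] := orthogonal2_cross m12 x1 x2.
have [t yE] := orthogonal2_cross m12 y1 y2.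
have t_neq0 : t != 0 by apply: contraNneq y_neq0 => t0; rewrite yE t0 scale0r.
by exists (s / t); rewrite yE scalerA divfK.
Qed.

End CrossProduct.

Section RegularDualNet.
Variables (K : fieldType) (n : nat).
Variables (L : 'I_3 -> 'I_n -> 'rV[K]_3) (l : 'I_3 -> 'rV[K]_3).
Hypotheses (n_gt1 : (1 < n)%N) (net : dual_3net L) (lines : component_lines L l).

Let o0 : 'I_n := Ordinal (ltnW n_gt1).
Let o1 : 'I_n := Ordinal n_gt1.

Lemma point_neq0 i a : L i a != 0.
Proof. by case: net. Qed.

Lemma point_on_line i a : dot (L i a) (l i) = 0.
Proof. by case: lines => _ _; apply. Qed.

Lemma net_meets_once (m : 'rV[K]_3) i j a b : m != 0 -> i <> j ->
  dot (L i a) m = 0 -> dot (L j b) m = 0 -> forall k, exists! c, dot (L k c) m = 0.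
Proof.
case: net => _ _ meet m0 ij ia jb.
exact: meet m m0 i j ij (ex_intro _ a ia) (ex_intro _ b jb).
Qed.

Lemma point_off_line i j a : i <> j -> dot (L i a) (l j) != 0.
Proof.
move=> ij; apply/eqP => on_lj.
have [l_neq0 _ _] := lines.
have [c [_ uniq_c]] := net_meets_once (l_neq0 j) ij on_lj (point_on_line j o0) j.
have o01 : o0 != o1 by [].
by move: o01; rewrite -(uniq_c o0 (point_on_line _ _)) -(uniq_c o1 (point_on_line _ _))
  eqxx.
Qed.

Lemma cross_points_neq0 i j a b : i <> j -> cross (L i a) (L j b) != 0.
Proof.
move=> ij; apply: cross_neq0; rewrite ?point_neq0 //.
by case: net => _ distinct _ /distinct[ji _]; apply: ij.
Qed.

Lemma cross_lines_neq0 i j : i <> j -> cross (l i) (l j) != 0.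
Proof.
case: lines => l_neq0 distinct _ ij.
by apply: cross_neq0 => //; apply: distinct; apply: nesym.
Qed.

Lemma exists_third a b : exists c, dot (L i2 c) (cross (L i0 a) (L i1 b)) == 0.
Proof.
have [c [c_on _]] := net_meets_once (cross_points_neq0 a b neq_i01) neq_i01
  (dot_crossl _ _) (dot_crossr _ _) i2.
by exists c; apply/eqP.
Qed.

Definition third a b : 'I_n := xchoose (exists_third a b).

Lemma third_on_line a b : dot (L i2 (third a b)) (cross (L i0 a) (L i1 b)) = 0.
Proof. exact/eqP/(xchooseP (exists_third a b)). Qed.

Lemma third_inj a : injective (third a).
Proof.
move=> b b' e.
have on_line b1 : dot (L i1 b1) (cross (L i0 a) (L i2 (third a b1))) = 0.
  by rewrite dot_cross_swap third_on_line oppr0.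
have [c [_ uniq_c]] := net_meets_once (cross_points_neq0 a (third a b) neq_i02)
  neq_i02 (dot_crossl _ _) (dot_crossr _ _) i1.
have cb : c = b' by apply: (uniq_c b'); rewrite e; apply: on_line.
by rewrite -cb (uniq_c b (on_line b)).
Qed.

Definition normalized (p q : 'I_3) (x : 'I_n) : 'rV[K]_3 :=
  (dot (L p x) (l q))^-1 *: L p x.

Lemma normalized_on_line p q x : dot (normalized p q x) (l p) = 0.
Proof. by rewrite dotZl point_on_line mulr0. Qed.

Lemma dot_normalized p q x : p <> q -> dot (normalized p q x) (l q) = 1.
Proof. by move=> pq; rewrite dotZl mulVf // point_off_line. Qed.

Lemma normalized_neq0 p q x : p <> q -> normalized p q x != 0.
Proof.
by move=> pq; rewrite scaler_eq0 invr_eq0 negb_or point_off_line // point_neq0.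
Qed.

Lemma normalized_inj p q : p <> q -> injective (normalized p q).
Proof.
move=> pq x y e; have [_ distinct _] := net.
suff /distinct[_ //] : proj_eq (L p x) (L p y).
exists (dot (L p y) (l q) / dot (L p x) (l q)); split.
  by rewrite mulf_neq0 ?invr_eq0 ?point_off_line.
by rewrite -scalerA -/(normalized p q x) e scalerA mulfV ?point_off_line // scale1r.
Qed.

Lemma line_neq_cross_points a b : cross (l i2) (cross (L i0 a) (L i1 b)) != 0.
Proof.
have [l_neq0 _ _] := lines.
apply: cross_neq0 (l_neq0 i2) (cross_points_neq0 a b neq_i01) _ => -[s [_ l2E]].
by move: (point_off_line a neq_i02); rewrite l2E dotZr dot_crossl mulr0 eqxx.
Qed.

Lemma collinear_relation a b :
  normalized i1 i2 b - normalized i0 i2 a =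
  dot (normalized i1 i2 b) (l i0) *: normalized i2 i0 (third a b).
Proof.
have x_on_l2 : dot (normalized i1 i2 b - normalized i0 i2 a) (l i2) = 0.
  by rewrite dotBl (dot_normalized b neq_i12) (dot_normalized a neq_i02) subrr.
have x_on_ab :
    dot (normalized i1 i2 b - normalized i0 i2 a) (cross (L i0 a) (L i1 b)) = 0.
  by rewrite dotBl !dotZl dot_crossl dot_crossr !mulr0 subrr.
have c_on_ab : dot (normalized i2 i0 (third a b)) (cross (L i0 a) (L i1 b)) = 0.
  by rewrite dotZl third_on_line mulr0.
have [r xE] := orthogonal2_proportional (line_neq_cross_points a b) x_on_l2 x_on_ab
  (normalized_on_line _ _ _) c_on_ab (normalized_neq0 _ (nesym neq_i02)).
rewrite xE; congr (_ *: _); have := congr1 (fun v => dot v (l i0)) xE.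
by rewrite /= dotBl normalized_on_line subr0 dotZl dot_normalized ?mulr1.
Qed.

Lemma concurrent_normalized_dot (cl : concurrent l) b b' :
  dot (normalized i1 i2 b) (l i0) = dot (normalized i1 i2 b') (l i0).
Proof.
case: cl => P [P_neq0 P_on].
have d1 : dot (normalized i1 i2 b - normalized i1 i2 b') (l i1) = 0.
  by rewrite dotBl !normalized_on_line subrr.
have d2 : dot (normalized i1 i2 b - normalized i1 i2 b') (l i2) = 0.
  by rewrite dotBl (dot_normalized b neq_i12) (dot_normalized b' neq_i12) subrr.
have [r dE] :=
  orthogonal2_proportional (cross_lines_neq0 neq_i12) d1 d2 (P_on i1) (P_on i2) P_neq0.
by apply/eqP; rewrite -subr_eq0 -dotBl dE dotZl (P_on i0 : dot P (l i0) = 0) mulr0.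
Qed.

Lemma concurrent_sum_relation (cl : concurrent l) a b0 :
  dot (normalized i1 i2 b0) (l i0) *: \sum_c normalized i2 i0 c =
  \sum_b normalized i1 i2 b - normalized i0 i2 a *+ n.
Proof.
rewrite (reindex_inj (@third_inj a)) scaler_sumr.
under eq_bigr => b _ do rewrite -(concurrent_normalized_dot cl b b0) -collinear_relation.
by rewrite sumrB sumr_const card_ord.
Qed.

Lemma regular_dual_3net_not_concurrent : n%:R != 0 :> K -> ~ concurrent l.
Proof.
move=> nK cl.
have same_normalized a : normalized i0 i2 o0 = normalized i0 i2 a.
  have := concurrent_sum_relation cl a o0.
  rewrite (concurrent_sum_relation cl o0 o0) => /addrI /oppr_inj.
  by rewrite -!scaler_nat => /(scalerI nK).
by have /(congr1 val) := normalized_inj neq_i02 (same_normalized o1).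
Qed.

End RegularDualNet.

Lemma natf_neq0_pchar_gt (K : fieldType) (n : nat) :
  (0 < n)%N -> (forall p, p \in [pchar K] -> n < p)%N -> n%:R != 0 :> K.
Proof.
move=> n_gt0 pchar_gt; apply/negP => n0; have [p p_char] := natf0_pchar n_gt0 n0.
have := pchar_gt p p_char; rewrite ltnNge.
by rewrite dvdn_leq // (dvdn_pcharf p_char) n0.
Qed.

Theorem lemma4p2 (K : closedFieldType) (n : nat) (L : 'I_3 -> 'I_n -> 'rV[K]_3) :
  (4 <= n)%N ->
  (forall p : nat, p \in [pchar K]%R -> n < p)%N ->
  dual_3net L -> regular_net L -> triangular_net L.
Proof.
move=> n_ge4 pchar_gt net [l lines]; exists l; split => //.
apply: (regular_dual_3net_not_concurrent (leq_trans _ n_ge4) net lines) => //.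
by apply: natf_neq0_pchar_gt; first exact: leq_trans n_ge4.
Qed.
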